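(* For monotone graph classes $\mathcal G_1$ and $\mathcal G_2$, the following are equivalent: (1) $\mathcal G_1\boxtimes\mathcal G_2$ has bounded pathwidth; (2) $\mathcal G_1\square\mathcal G_2$ has bounded pathwidth; (3) both $\mathcal G_1$ and $\mathcal G_2$ have bounded pathwidth, and $\tilde{\mathsf v}(\mathcal G_1)$ or $\tilde{\mathsf v}(\mathcal G_2)$ is bounded.
   Context: A graph class is a set of graphs closed under isomorphism containing a graph with non-empty vertex set; it is monotone if closed under taking subgraphs. For a graph parameter $\beta$ and class $\mathcal G$, $\beta(\mathcal G):=\sup\{\beta(G):G\in\mathcal G\}$, and $\beta(\mathcal G)$ is bounded if this supremum is finite. $\tilde{\mathsf v}(G)$ is the maximum number of vertices of a connected component of $G$. For a product $\bullet$, $\mathcal G_1\bullet\mathcal G_2:=\{G_1\bullet G_2: G_1\in\mathcal G_1, G_2\in\mathcal G_2\}$. The cartesian product $G_1 \square G_2$ has vertex set $V(G_1)\times V(G_2)$, with $(a,v)(b,u)$ an edge iff either $ab\in E(G_1)$ and $u=v$, or $uv\in E(G_2)$ and $a=b$; the strong product $G_1\boxtimes G_2$ has the same vertex set, with distinct vertices $(a,v),(b,u)$ adjacent iff ($a=b$ or $ab\in E(G_1)$) and ($u=v$ or $uv\in E(G_2)$). *)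

From Stdlib Require Import ClassicalEpsilon.
From mathcomp Require Import all_boot.
Set Implicit Arguments. Unset Strict Implicit. Unset Printing Implicit Defensive.

Record graph := Graph {
  vtx : finType;
  adj : rel vtx;
  adj_sym : symmetric adj;
  adj_irr : irreflexive adj }.
Arguments adj : clear implicits.
Arguments vtx : clear implicits.
Arguments adj_sym : clear implicits.
Arguments adj_irr : clear implicits.

Definition iso (G H : graph) : Prop :=
  exists f : vtx G -> vtx H, bijective f /\ forall x y, adj H (f x) (f y) = adj G x y.

Definition subgraph (H G : graph) : Prop :=
  exists f : vtx H -> vtx G, injective f /\ forall x y, adj H x y -> adj G (f x) (f y).

Definition graph_class (C : graph -> Prop) : Prop :=
  (forall G H, iso G H -> C G -> C H) /\ (exists G, C G /\ 0 < #|vtx G|).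

Definition monotone (C : graph -> Prop) : Prop :=
  graph_class C /\ (forall G H, subgraph H G -> C G -> C H).

Definition path_decomposition (G : graph) (B : seq {set vtx G}) : Prop :=
  (forall v : vtx G, exists2 X, X \in B & v \in X) /\
  (forall u v : vtx G, adj G u v -> exists2 X, X \in B & (u \in X) && (v \in X)) /\
  (forall (v : vtx G) (i j l : nat), i <= j -> j <= l -> l < size B ->
      v \in nth set0 B i -> v \in nth set0 B l -> v \in nth set0 B j).

Definition pw_at_most (G : graph) (k : nat) : Prop :=
  exists B : seq {set vtx G}, @path_decomposition G B /\ forall X, X \in B -> #|X| <= k.+1.

Lemma pw_exists (G : graph) : exists k, pw_at_most G k.
Proof.
exists #|vtx G|; exists [:: setT]; split; last first.
  by move=> X; rewrite inE => /eqP ->; rewrite cardsT; apply: leqW.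
split; first by move=> v; exists setT; rewrite ?inE.
split; first by move=> u v _; exists setT; rewrite ?inE.
by move=> v [|i] [|j] [|l] //=.
Qed.

Definition pw_at_mostb (G : graph) (k : nat) : bool :=
  if excluded_middle_informative (pw_at_most G k) then true else false.

Lemma pw_existsb (G : graph) : exists k, pw_at_mostb G k.
Proof.
have [k Hk] := pw_exists G; exists k; rewrite /pw_at_mostb.
by case: excluded_middle_informative.
Qed.

Definition pathwidth (G : graph) : nat := ex_minn (pw_existsb G).

Definition max_comp (G : graph) : nat :=
  \max_(x : vtx G) #|[set y | connect (adj G) x y]|.

Definition bounded (beta : graph -> nat) (C : graph -> Prop) : Prop :=
  exists b, forall G, C G -> beta G <= b.

Section Products.
Variables G1 G2 : graph.
Definition sadj : rel (vtx G1 * vtx G2) := fun p q =>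
  (p != q) && ((p.1 == q.1) || adj G1 p.1 q.1) && ((p.2 == q.2) || adj G2 p.2 q.2).
Lemma sadj_sym : symmetric sadj.
Proof.
move=> [a v] [b u]; rewrite /sadj /= [(b, u) == _]eq_sym [b == a]eq_sym
  [u == v]eq_sym (adj_sym G1 a b) (adj_sym G2 v u).
by [].
Qed.
Lemma sadj_irr : irreflexive sadj.
Proof. by move=> p; rewrite /sadj eqxx. Qed.
Definition strong := Graph sadj_sym sadj_irr.

Definition cadj : rel (vtx G1 * vtx G2) := fun p q =>
  (adj G1 p.1 q.1 && (p.2 == q.2)) || (adj G2 p.2 q.2 && (p.1 == q.1)).
Lemma cadj_sym : symmetric cadj.
Proof.
move=> [a v] [b u]; rewrite /cadj /= [b == a]eq_sym [u == v]eq_sym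
  (adj_sym G1 a b) (adj_sym G2 v u).
by [].
Qed.
Lemma cadj_irr : irreflexive cadj.
Proof. by move=> [a v]; rewrite /cadj /= !adj_irr. Qed.
Definition cartesian := Graph cadj_sym cadj_irr.
End Products.

Definition class_prod (prod : graph -> graph -> graph) (C1 C2 : graph -> Prop) :
  graph -> Prop :=
  fun G => exists G1 G2, C1 G1 /\ C2 G2 /\ G = prod G1 G2.

(* If G1 has a component K1 and G2 a component K2, the rows {a} x K2 and the
   columns K1 x {v} of G1 □ G2 are connected and pairwise intersecting;
   connected sets in a path decomposition satisfy a Helly property, so some
   bag meets all rows or all columns and has at least min(|K1|, |K2|)
   vertices.  Hence bounded pathwidth of the cartesian products forces one
   class to have bounded components.  Conversely, if the components of G2
   have at most c vertices, the bags X x K, for X a bag of G1 and K a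
   component of G2, listed component by component, decompose G1 ⊠ G2 with
   width (pw(G1) + 1) c - 1.  The remaining implications come from
   G1 □ G2 ⊆ G1 ⊠ G2 and G1, G2 ⊆ G1 □ G2. *)

From mathcomp Require Import all_boot zify.
From Stdlib Require Import Classical ClassicalEpsilon.
Set Implicit Arguments. Unset Strict Implicit. Unset Printing Implicit Defensive.

Lemma pathwidth_spec G : pw_at_most G (pathwidth G).
Proof.
rewrite /pathwidth; case: ex_minnP => k + _; rewrite /pw_at_mostb.
by case: excluded_middle_informative.
Qed.

Lemma pathwidth_le G k : pw_at_most G k -> pathwidth G <= k.
Proof.
move=> h; rewrite /pathwidth; case: ex_minnP => m _; apply.
by rewrite /pw_at_mostb; case: excluded_middle_informative.
Qed.

Lemma pathwidth_subgraph (H G : graph) (f : vtx H -> vtx G) : injective f ->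
  {homo f : x y / adj H x y >-> adj G x y} -> pathwidth H <= pathwidth G.
Proof.
move=> finj fE; have [B [[Bcov [Bedge Bconv]] Bsize]] := pathwidth_spec G.
apply: pathwidth_le; exists (map (fun X : {set vtx G} => f @^-1: X) B); split; first split.
- move=> v; have [X XB vX] := Bcov (f v).
  by exists (f @^-1: X); [exact: map_f | rewrite inE].
- split.
  + move=> u v uv; have [X XB /andP[uX vX]] := Bedge _ _ (fE _ _ uv).
    by exists (f @^-1: X); [exact: map_f | rewrite !inE uX vX].
  + move=> v i j l ij jl; rewrite size_map => lB.
    have jB := leq_ltn_trans jl lB; have iB := leq_ltn_trans ij jB.
    rewrite !(nth_map set0) // !inE; exact: Bconv.
- move=> _ /mapP [X XB ->]; apply: leq_trans (Bsize X XB).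
  rewrite -(card_imset _ finj); apply: subset_leq_card.
  by apply/subsetP => _ /imsetP [x + ->]; rewrite inE.
Qed.

Lemma classical_ex_minn (P : nat -> Prop) : (exists n, P n) ->
  exists n, P n /\ forall m, m < n -> ~ P m.
Proof.
case=> n; elim/ltn_ind: n => n IH Pn.
case: (classic (exists2 m, m < n & P m)) => [[m mn Pm]|hmin]; first exact: IH mn Pm.
by exists n; split => // m mn Pm; apply: hmin; exists m.
Qed.

Definition component (G : graph) (x : vtx G) : {set vtx G} :=
  [set y | connect (adj G) x y].

Definition path_connected (G : graph) (S : {set vtx G}) : Prop :=
  forall w1 w2, w1 \in S -> w2 \in S ->
  exists p, [/\ path (adj G) w1 p, last w1 p = w2 & {subset p <= S}].

Lemma path_connected_image (H G : graph) (h : vtx H -> vtx G) (x : vtx H) :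
  {homo h : y z / adj H y z >-> adj G y z} -> path_connected (h @: component x).
Proof.
move=> hE _ _ /imsetP [y1 + ->] /imsetP [y2 + ->]; rewrite !inE => xy1 xy2.
have csym := sym_connect_sym (adj_sym H).
have : connect (adj H) y1 y2 by rewrite (connect_trans _ xy2) // csym.
case/connectP => p py1 ->; exists (map h p); split.
- exact: homo_path py1.
- by rewrite last_map.
- move=> _ /mapP [y yp ->]; rewrite imset_f // inE (connect_trans xy1) //.
  by apply: (path_connect py1); rewrite inE yp orbT.
Qed.

Section PathDecomposition.
Variables (G : graph) (B : seq {set vtx G}).
Hypothesis hB : path_decomposition B.

Lemma bag_conv v i j l : i <= j -> j <= l ->
  v \in nth set0 B i -> v \in nth set0 B l -> v \in nth set0 B j.
Proof.
move=> ij jl vi vl; have [_ [_ Bconv]] := hB; apply: (Bconv v i j l) => //.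
by case: ltnP vl => // lB; rewrite nth_default // inE.
Qed.

Lemma bag_of v : exists i, v \in nth set0 B i.
Proof. by have [X XB vX] := hB.1 v; exists (index X B); rewrite nth_index. Qed.

Definition meets (S : {set vtx G}) k := exists2 w, w \in S & w \in nth set0 B k.

Definition ends_by (S : {set vtx G}) t := forall k, t < k -> ~ meets S k.

(* A path from bag i to bag l must enter every bag in between, since its
   edges lie in bags and each vertex occupies an interval of bags. *)
Lemma path_meets_between x p i j l : path (adj G) x p ->
  x \in nth set0 B i -> last x p \in nth set0 B l -> i <= j -> j <= l ->
  exists2 w, w \in x :: p & w \in nth set0 B j.
Proof.
elim: p x i => [|z p IH] x i /=.
  by move=> _ xi xl ij jl; exists x; [exact: mem_head | exact: bag_conv xi xl].
move=> /andP [xz pz] xi zl ij jl.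
have [_ [Bedge _]] := hB; have [X XB /andP [xX zX]] := Bedge _ _ xz.
have eX := nth_index set0 XB.
case: (leqP (index X B) j) => kj.
  have zX' : z \in nth set0 B (index X B) by rewrite eX.
  have [w wp wj] := IH z _ pz zX' zl kj jl.
  by exists w => //; rewrite inE wp orbT.
exists x; first exact: mem_head.
by apply: (@bag_conv _ i _ (index X B)) => //; [exact: ltnW | rewrite eX].
Qed.

Lemma meets_conv S i j l : path_connected S -> meets S i -> meets S l ->
  i <= j -> j <= l -> meets S j.
Proof.
move=> Sconn [w1 S1 i1] [w2 S2 l2] ij jl.
have [p [pp lp pS]] := Sconn _ _ S1 S2.
have l2' : last w1 p \in nth set0 B l by rewrite lp.
have [w wp wj] := path_meets_between pp i1 l2' ij jl.
by exists w => //; move: wp; rewrite inE => /orP [/eqP -> | /pS].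
Qed.

Lemma meets_at_end S T t : ends_by S t -> path_connected T ->
  (exists2 w, w \in S & w \in T) -> (exists2 k, t <= k & meets T k) -> meets T t.
Proof.
move=> Send Tconn [w wS wT] [k tk Tk]; have [i wi] := bag_of w.
have it : i <= t by rewrite leqNgt; apply/negP => ti; apply: (Send i ti); exists w.
by apply: (meets_conv Tconn _ Tk it tk); exists w.
Qed.

(* Take the least t after which some member S of the two families meets no
   bag: every set of the other family meets S and reaches a bag >= t, hence,
   being connected, meets bag t. *)
Lemma helly_path_connected (I J : Type) (R : I -> {set vtx G})
    (C : J -> {set vtx G}) (i0 : I) :
  (forall i, path_connected (R i)) -> (forall j, path_connected (C j)) ->
  (forall i j, exists2 w, w \in R i & w \in C j) ->
  exists t, (forall j, meets (C j) t) \/ (forall i, meets (R i) t).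
Proof.
move=> Rconn Cconn RC.
pose member S := (exists i, S = R i) \/ (exists j, S = C j).
pose ends_at t := exists S, member S /\ ends_by S t.
have [t [[S [memS Send]] tmin]] : exists t, ends_at t /\ forall m, m < t -> ~ ends_at m.
  apply: classical_ex_minn; exists (size B), (R i0); split; first by left; exists i0.
  by move=> k Bk [w _]; rewrite nth_default ?inE //; exact: ltnW.
have reach T : member T -> (exists w, w \in T) -> exists2 k, t <= k & meets T k.
  move=> memT [w wT]; case: t tmin {Send} => [_ | t tmin].
    by have [k wk] := bag_of w; exists k => //; exists w.
  apply: NNPP => noreach; apply: (tmin t (ltnSn t)); exists T; split => // k tk Tk.
  by apply: noreach; exists k.
exists t; case: memS => [[i ->] | [j ->]] in Send *.
- left => j; apply: meets_at_end Send (Cconn j) (RC i j) (reach _ _ _).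
    by right; exists j.
  by have [w _ wC] := RC i j; exists w.
- right => i; apply: meets_at_end Send (Rconn i) _ (reach _ _ _).
  + by have [w wR wC] := RC i j; exists w.
  + by left; exists i.
  + by have [w wR _] := RC i j; exists w.
Qed.

End PathDecomposition.

Lemma leq_card_imset_cover (T U : finType) (f : T -> U) (X : {set T}) (A : {set U}) :
  {subset A <= f @: X} -> #|A| <= #|X|.
Proof. by move=> AX; apply: leq_trans (leq_imset_card f X); apply/subset_leq_card/subsetP. Qed.

Section CartesianLowerBound.
Variables G1 G2 : graph.
Local Notation GG := (cartesian G1 G2).

Lemma row_hom (a : vtx G1) : {homo pair a : v u / adj G2 v u >-> adj GG v u}.
Proof. by move=> v u vu; rewrite /= /cadj /= vu eqxx orbT. Qed.

Lemma column_hom (v : vtx G2) :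
  {homo (fun a => (a, v)) : a b / adj G1 a b >-> adj GG a b}.
Proof. by move=> a b ab; rewrite /= /cadj /= ab eqxx. Qed.

Lemma cartesian_pathwidth_ge_component (x1 : vtx G1) (x2 : vtx G2) :
  minn #|component x1| #|component x2| <= (pathwidth GG).+1.
Proof.
have [B [hB Bsize]] := pathwidth_spec GG.
pose I := {a | a \in component x1}; pose J := {v | v \in component x2}.
pose row (i : I) : {set vtx GG} := pair (sval i) @: component x2.
pose col (j : J) : {set vtx GG} := (fun a => (a, sval j)) @: component x1.
have i0 : I by exists x1; rewrite inE connect0.
have j0 : J by exists x2; rewrite inE connect0.
have rowP i : path_connected (row i) by apply: path_connected_image; exact: row_hom.
have colP j : path_connected (col j) by apply: path_connected_image; exact: column_hom.
have rowcol i j : exists2 w, w \in row i & w \in col j.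
  by exists (sval i, sval j); apply: imset_f; [exact: (svalP j) | exact: (svalP i)].
have bag_small t w : w \in nth set0 B t -> #|nth set0 B t| <= (pathwidth GG).+1.
  move=> wt; apply/Bsize/mem_nth; case: ltnP wt => // Bt.
  by rewrite nth_default // inE.
have [t [meet_cols | meet_rows]] := helly_path_connected hB i0 rowP colP rowcol.
- have [w _ wt] := meet_cols j0; apply: leq_trans (geq_minr _ _) _.
  apply: leq_trans (bag_small _ _ wt); apply: (@leq_card_imset_cover (vtx GG) _ snd) => v vC.
  have [w' /imsetP [a _ ->] w't] := meet_cols (exist _ v vC).
  by apply/imsetP; exists (a, v).
- have [w _ wt] := meet_rows i0; apply: leq_trans (geq_minl _ _) _.
  apply: leq_trans (bag_small _ _ wt); apply: (@leq_card_imset_cover (vtx GG) _ fst) => a aC.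
  have [w' /imsetP [v _ ->] w't] := meet_rows (exist _ a aC).
  by apply/imsetP; exists (a, v).
Qed.

End CartesianLowerBound.

(* Bag number [q * s + i] is [X_i x K_q], where [X_0, ..., X_(s-1)] is the
   decomposition of G1 and [K_q] the q-th component of G2 (components are
   numbered through the position of their root in [roots_seq]). *)
Section StrongUpperBound.
Variables (G1 G2 : graph) (k c : nat) (B : seq {set vtx G1}).
Hypothesis hB : path_decomposition B.
Hypothesis B_small : forall X, X \in B -> #|X| <= k.+1.
Hypothesis G2_small : max_comp G2 <= c.
Local Notation e := (adj G2).

Let e_csym : connect_sym e. Proof. exact: sym_connect_sym (adj_sym G2). Qed.
Let roots_seq := enum (roots e).
Let s := size B.
Let m := size roots_seq.
Let comp_index (y : vtx G2) := index (root e y) roots_seq.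
Let bag (n : nat) : {set vtx G1 * vtx G2} :=
  setX (nth set0 B (n %% s)) [set y | comp_index y == n %/ s].
Let bags := mkseq bag (s * m).

Let mem_bags n w : n < s * m -> (w \in nth set0 bags n) =
  (w.1 \in nth set0 B (n %% s)) && (comp_index w.2 == n %/ s).
Proof. by move=> nsm; rewrite nth_mkseq // /bag; case: w => a v; rewrite in_setX inE. Qed.

Let bags_size n w : w \in nth set0 bags n -> n < s * m.
Proof. by case: ltnP => // h; rewrite nth_default ?inE // size_mkseq. Qed.

Let comp_index_lt y : comp_index y < m.
Proof. by rewrite index_mem mem_enum; exact: roots_root. Qed.

Let comp_index_eq y z : (comp_index y == comp_index z) = connect e y z.
Proof.
rewrite /comp_index -root_connect //; apply/eqP/eqP => [|-> //].
have in_roots x : root e x \in roots_seq by rewrite mem_enum; exact: roots_root.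
by move/(congr1 (nth y roots_seq)); rewrite !nth_index.
Qed.

Let bag_index X q : X \in B -> q < m ->
  let n := q * s + index X B in [/\ n < s * m, n %% s = index X B & n %/ s = q].
Proof.
move=> XB qm /=; have iS : index X B < s by rewrite index_mem.
have s0 : 0 < s by case: (s) iS.
split.
- apply: (@leq_trans (q.+1 * s)); first by rewrite mulSn; lia.
  by rewrite mulnC leq_mul2l qm orbT.
- by rewrite modnMDl modn_small.
- by rewrite divnMDl // divn_small // addn0.
Qed.

Let edge_in_bags a b v u : (a == b) || adj G1 a b -> comp_index u = comp_index v ->
  exists2 Y, Y \in bags & ((a, v) \in Y) && ((b, u) \in Y).
Proof.
move=> ab uv; have [_ [Bedge _]] := hB.
have [X XB /andP [aX bX]] : exists2 X, X \in B & (a \in X) && (b \in X).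
  case/orP: ab => [/eqP <- | ab]; last exact: Bedge.
  by have [X XB aX] := hB.1 a; exists X; rewrite ?aX.
have [nsm nm nd] := bag_index XB (comp_index_lt v).
exists (nth set0 bags (comp_index v * s + index X B)).
  by apply: mem_nth; rewrite size_mkseq.
by rewrite !mem_bags //= nm nd nth_index // aX bX uv eqxx.
Qed.

Let bags_conv w i j l : i <= j -> j <= l ->
  w \in nth set0 bags i -> w \in nth set0 bags l -> w \in nth set0 bags j.
Proof.
move=> ij jl wi wl; have ism := bags_size wi; have lsm := bags_size wl.
have jsm : j < s * m by apply: leq_ltn_trans jl lsm.
move: wi wl; rewrite !mem_bags // => /andP [wi /eqP qi] /andP [wl /eqP ql].
have s0 : 0 < s by case: (s) ism.
have qj : j %/ s = i %/ s.
  apply/eqP; rewrite eqn_leq (leq_div2r _ ij) -qi ql leq_div2r //.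
rewrite qj -qi eqxx andbT.
have ei := divn_eq i s; have ej := divn_eq j s; have el := divn_eq l s.
rewrite qj in ej; rewrite -ql qi in el.
by apply: (bag_conv hB (i := i %% s) (l := l %% s)) => //; lia.
Qed.

Let bag_small n : n < s * m -> #|bag n| <= k.+1 * c.
Proof.
move=> nsm; rewrite /bag cardsX; apply: leq_mul.
  have s0 : 0 < s by case: (s) nsm.
  by apply/B_small/mem_nth; rewrite ltn_pmod.
case: (set_0Vmem [set y | comp_index y == n %/ s]) => [-> | [y]]; first by rewrite cards0.
rewrite inE => /eqP yn; apply: leq_trans G2_small; apply: leq_trans (leq_bigmax y).
apply/subset_leq_card/subsetP => z; rewrite !inE -comp_index_eq yn.
by rewrite eq_sym.
Qed.

Lemma strong_pw_at_most : pw_at_most (strong G1 G2) (k.+1 * c - 1).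
Proof.
exists bags; split; first split.
- move=> [a v]; have aa : (a == a) || adj G1 a a by rewrite eqxx.
  by have [Y Ybags /andP [aY _]] := @edge_in_bags _ _ v v aa (erefl _); exists Y.
- split.
  + move=> [a v] [b u] /andP [/andP [_ /= ab] /= vu]; apply: edge_in_bags => //.
    apply/eqP; rewrite comp_index_eq.
    by case/orP: vu => [/eqP -> | vu]; [exact: connect0 | rewrite e_csym; exact: connect1].
  + by move=> w i j l ij jl lB; exact: bags_conv.
- move=> Y /mapP [n]; rewrite mem_iota add0n => /andP [_ nsm] ->.
  by apply: leq_trans (bag_small nsm) _; lia.
Qed.

End StrongUpperBound.

Lemma strong_pathwidth_le G1 G2 k c : pathwidth G1 <= k -> max_comp G2 <= c ->
  pathwidth (strong G1 G2) <= k.+1 * c - 1.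
Proof.
move=> G1k G2c; have [B [hB Bsize]] := pathwidth_spec G1.
apply/pathwidth_le/(strong_pw_at_most hB) => // X XB.
exact: leq_trans (Bsize X XB) _.
Qed.

Lemma cartesian_pathwidth_le_strong G1 G2 :
  pathwidth (cartesian G1 G2) <= pathwidth (strong G1 G2).
Proof.
apply: (@pathwidth_subgraph (cartesian G1 G2) (strong G1 G2) id) => // -[a v] [b u].
rewrite /= /cadj /sadj /= xpair_eqE.
by case/orP => /andP [ab /eqP ->]; rewrite ab eqxx orbT ?andbT ?andbb /=;
  apply: contraTneq ab => ->; rewrite adj_irr.
Qed.

Lemma strong_pathwidth_swap G1 G2 :
  pathwidth (strong G1 G2) <= pathwidth (strong G2 G1).
Proof.
apply: (@pathwidth_subgraph (strong G1 G2) (strong G2 G1) (fun p => (p.2, p.1))).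
  by move=> [a v] [b u] /= [-> ->].
move=> [a v] [b u]; rewrite /= /sadj /= !xpair_eqE => /andP [/andP [ne ->] ->].
by rewrite [(v == u) && _]andbC ne.
Qed.

Lemma pathwidth_le_cartesian_l G1 G2 (v : vtx G2) :
  pathwidth G1 <= pathwidth (cartesian G1 G2).
Proof.
apply: (@pathwidth_subgraph G1 (cartesian G1 G2) (fun a => (a, v))) => [a b [] // | a b ab].
by rewrite /= /cadj /= ab eqxx.
Qed.

Lemma pathwidth_le_cartesian_r G1 G2 (a : vtx G1) :
  pathwidth G2 <= pathwidth (cartesian G1 G2).
Proof.
apply: (@pathwidth_subgraph G2 (cartesian G1 G2) (pair a)) => [v u [] // | v u vu].
by rewrite /= /cadj /= vu eqxx orbT.
Qed.

Lemma unbounded_max_comp C n : ~ bounded max_comp C ->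
  exists G, C G /\ exists x : vtx G, n < #|component x|.
Proof.
move=> unbounded; apply: NNPP => small; apply: unbounded; exists n => G CG.
apply/bigmax_leqP => x _; rewrite leqNgt; apply/negP => big.
by apply: small; exists G; split => //; exists x.
Qed.

Section ProductClasses.
Variables C1 C2 : graph -> Prop.

Lemma bounded_cartesian_of_strong :
  bounded pathwidth (class_prod strong C1 C2) ->
  bounded pathwidth (class_prod cartesian C1 C2).
Proof.
case=> b hb; exists b => _ [G1 [G2 [c1 [c2 ->]]]].
by apply: leq_trans (cartesian_pathwidth_le_strong _ _) (hb _ _); exists G1, G2.
Qed.

Lemma bounded_pathwidth_factor_l : (exists G, C2 G /\ 0 < #|vtx G|) ->
  bounded pathwidth (class_prod cartesian C1 C2) -> bounded pathwidth C1.
Proof.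
move=> [G2 [c2 /card_gt0P [v _]]] [b hb]; exists b => G1 c1.
by apply: leq_trans (pathwidth_le_cartesian_l _ v) (hb _ _); exists G1, G2.
Qed.

Lemma bounded_pathwidth_factor_r : (exists G, C1 G /\ 0 < #|vtx G|) ->
  bounded pathwidth (class_prod cartesian C1 C2) -> bounded pathwidth C2.
Proof.
move=> [G1 [c1 /card_gt0P [a _]]] [b hb]; exists b => G2 c2.
by apply: leq_trans (pathwidth_le_cartesian_r _ a) (hb _ _); exists G1, G2.
Qed.

Lemma bounded_max_comp_of_cartesian :
  bounded pathwidth (class_prod cartesian C1 C2) ->
  bounded max_comp C1 \/ bounded max_comp C2.
Proof.
case=> b hb; apply: NNPP => /not_or_and [unb1 unb2].
have [G1 [c1 [x1 big1]]] := unbounded_max_comp b.+1 unb1.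
have [G2 [c2 [x2 big2]]] := unbounded_max_comp b.+1 unb2.
have : pathwidth (cartesian G1 G2) <= b by apply: hb; exists G1, G2.
have : b.+1 < minn #|component x1| #|component x2| by rewrite leq_min big1 big2.
have := cartesian_pathwidth_ge_component x1 x2; lia.
Qed.

Lemma bounded_strong_of_factors :
  bounded pathwidth C1 -> bounded pathwidth C2 ->
  bounded max_comp C1 \/ bounded max_comp C2 ->
  bounded pathwidth (class_prod strong C1 C2).
Proof.
move=> [b1 h1] [b2 h2] [[c hc] | [c hc]].
- exists (b2.+1 * c - 1) => _ [G1 [G2 [c1 [c2 ->]]]].
  exact: leq_trans (strong_pathwidth_swap _ _) (strong_pathwidth_le (h2 _ c2) (hc _ c1)).
- exists (b1.+1 * c - 1) => _ [G1 [G2 [c1 [c2 ->]]]].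
  exact: strong_pathwidth_le (h1 _ c1) (hc _ c2).
Qed.

End ProductClasses.

Theorem mainTheorem14 (C1 C2 : graph -> Prop) :
  monotone C1 -> monotone C2 ->
  (bounded pathwidth (class_prod strong C1 C2) <->
     bounded pathwidth (class_prod cartesian C1 C2)) /\
  (bounded pathwidth (class_prod cartesian C1 C2) <->
     (bounded pathwidth C1 /\ bounded pathwidth C2 /\
      (bounded max_comp C1 \/ bounded max_comp C2))).
Proof.
move=> [[_ ne1] _] [[_ ne2] _].
have cartesian_factors : bounded pathwidth (class_prod cartesian C1 C2) ->
    bounded pathwidth C1 /\ bounded pathwidth C2 /\
    (bounded max_comp C1 \/ bounded max_comp C2).
  move=> hb; split; first exact: bounded_pathwidth_factor_l hb.
  by split; [exact: bounded_pathwidth_factor_r hb | exact: bounded_max_comp_of_cartesian].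
have factors_strong := @bounded_strong_of_factors C1 C2.
split; split; first exact: bounded_cartesian_of_strong.
- by move/cartesian_factors => [? [? ?]]; exact: factors_strong.
- exact: cartesian_factors.
- by move=> [? [? ?]]; apply: bounded_cartesian_of_strong; exact: factors_strong.
Qed.
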